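(* Let $n,k$ be positive integers and let $b_{\max} = \max\{b\in\mathbb{N}^* : WS^+_b(n+1) = WS^+(n+1)\}$. Then $$WS(n+k) \geq S(k)\,WS^+(n+1) + b_{\max}.$$
   Context: A set $A \subseteq \mathbb{N}$ is sum-free if for all $(a,b)\in A^2$ (allowing $a=b$), $a+b \notin A$; it is weakly sum-free if for all $(a,b)\in A^2$ with $a\neq b$, $a+b\notin A$. $S(n)$ (resp. $WS(n)$) is the largest $p$ such that $\{1,\dots,p\}$ can be partitioned into $n$ sum-free (resp. weakly sum-free) subsets. For positive integers $a>b$, let $\pi(x) = (x \bmod a) + a\cdot \mathbb{1}_{\{0,\dots,b\}}(x \bmod a)$. For positive integers $a,m,b$ with $a>b$, a partition $(A_1,\dots,A_m)$ of $\{1,\dots,a+b\}$ is a $b$-WS-template with width $a$ and $m$ colors if: (i) every $A_i$ is weakly sum-free; (ii) every $A_i\setminus\{1,\dots,b\}$ is sum-free; (iii) for all $(x,y)\in A_m^2$, $x+y>b+2a$ implies $x+y-2a\notin A_m$; (iv) for all $i\in\{1,\dots,m-1\}$ and $(x,y)\in A_i^2$, $x+y>a+b$ implies $\pi(x+y)\notin A_i$. $WS^+_b(m)$ is the largest $a$ such that a $b$-WS-template with width $a$ and $m$ colors exists ($0$ if none), and $WS^+(m)=\max_{b\in\mathbb{N}^*} WS^+_b(m)$. *)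

From mathcomp Require Import all_boot.
Set Implicit Arguments. Unset Strict Implicit. Unset Printing Implicit Defensive.

(* A partition of {1,...,N} into m (possibly empty) parts A_0,...,A_{m-1}
   is represented by a colouring c : nat -> nat with c x < m on {1..N};
   A_i = {x in {1..N} | c x = i}. *)
Definition inA (c : nat -> nat) (N i x : nat) : Prop := 1 <= x <= N /\ c x = i.

Definition colouring (c : nat -> nat) (N m : nat) : Prop :=
  forall x, 1 <= x <= N -> c x < m.

Definition SF_partitionable (n p : nat) : Prop :=
  exists c, colouring c p n /\
    forall i x y, inA c p i x -> inA c p i y -> ~ inA c p i (x + y).

Definition WSF_partitionable (n p : nat) : Prop :=
  exists c, colouring c p n /\
    forall i x y, x <> y -> inA c p i x -> inA c p i y -> ~ inA c p i (x + y).

Definition IsLargest (P : nat -> Prop) (v : nat) : Prop :=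
  P v /\ forall u, P u -> u <= v.

Definition pi_ab (a b x : nat) : nat := x %% a + a * (x %% a <= b).

(* b-WS-template with width a and m colours; the last part A_m is colour m.-1 *)
Definition WS_template (b a m : nat) : Prop :=
  0 < b /\ b < a /\ 0 < m /\
  exists c, colouring c (a + b) m /\
    (forall i x y, x <> y -> inA c (a + b) i x -> inA c (a + b) i y ->
        ~ inA c (a + b) i (x + y)) /\
    (forall i x y, b < x -> b < y -> inA c (a + b) i x -> inA c (a + b) i y ->
        ~ (b < x + y /\ inA c (a + b) i (x + y))) /\
    (forall x y, inA c (a + b) m.-1 x -> inA c (a + b) m.-1 y ->
        b + 2 * a < x + y -> ~ inA c (a + b) m.-1 (x + y - 2 * a)) /\
    (forall i x y, i < m.-1 -> inA c (a + b) i x -> inA c (a + b) i y ->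
        a + b < x + y -> ~ inA c (a + b) i (pi_ab a b (x + y))).

Definition IsWSplus_b (b m w : nat) : Prop :=
  (forall a, WS_template b a m -> a <= w) /\
  (WS_template b w m \/ (w = 0 /\ forall a, ~ WS_template b a m)).

Definition IsWSplus (m W : nat) : Prop :=
  (forall b, 0 < b -> exists w, IsWSplus_b b m w /\ w <= W) /\
  (exists b, 0 < b /\ IsWSplus_b b m W).

From mathcomp Require Import all_boot zify.

Set Implicit Arguments.
Unset Strict Implicit.
Unset Printing Implicit Defensive.

(* Fix a b-WS-template of width a with colours 0..n and a sum-free colouring
   of {1..s} with k colours.  Write every z in {1..s*a+b} as z = w + q*a with
   w in {1..a+b} and w > b unless q = 0, and give z the template colour of w
   if it is below n, and colour n + (colour of q+1) otherwise.  For a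
   monochromatic x + y = z the residues satisfy w_x + w_y = w_z + e*a with
   e in {0,1,2}: e = 0 is excluded by (i)-(ii), e > 0 by (iv) for the colours
   below n; for the split colour n, e = 1 forces (q_x+1) + (q_y+1) = q_z+1 and
   e = 2 is excluded by (iii).  With a = WS^+(n+1), b = b_max and s = S(k)
   this colours {1..S(k) WS^+(n+1) + b_max} with n + k colours. *)

Section Residues.

Variables a b : nat.
Hypothesis lt_ba : b < a.

Definition residue z := if z <= b then z else b.+1 + (z - b.+1) %% a.

(* Truncated subtraction makes the layer of any z <= b equal to 0. *)
Definition layer z := (z - b.+1) %/ a.

Let a_gt0 : 0 < a. Proof. lia. Qed.

Lemma residue_small z : z <= b -> residue z = z.
Proof. by rewrite /residue => ->. Qed.

Lemma layer_small z : z <= b -> layer z = 0.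
Proof. by move=> zb; rewrite /layer (_ : z - b.+1 = 0) ?div0n //; lia. Qed.

Lemma residue_layerE z : residue z + layer z * a = z.
Proof.
rewrite /residue; case: ifP => [zb | /negbT zb].
  by rewrite (layer_small zb) mul0n addn0.
by rewrite /layer; have := divn_eq (z - b.+1) a; lia.
Qed.

Lemma residue_le z : residue z <= a + b.
Proof.
rewrite /residue; case: ifP => [zb | _]; last have := ltn_pmod (z - b.+1) a_gt0; lia.
Qed.

Lemma residue_gt0 z : 0 < z -> 0 < residue z.
Proof. by rewrite /residue; case: ifP. Qed.

Lemma leq_residue z : (residue z <= b) = (z <= b).
Proof. by rewrite /residue; case: ifP => // _; apply/negbTE; lia. Qed.

Lemma residue_layer_unique w q : w <= a + b -> b < w \/ q = 0 ->
  residue (w + q * a) = w /\ layer (w + q * a) = q.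
Proof.
move=> wab hw; case: (leqP w b) => [wb | bw].
  have -> : q = 0 by case: hw; lia.
  by rewrite mul0n addn0 residue_small ?layer_small.
rewrite /residue /layer ifN; last lia.
rewrite (_ : w + q * a - b.+1 = q * a + (w - b.+1)); last lia.
by rewrite modnMDl divnMDl // modn_small ?divn_small; lia.
Qed.

Lemma layer_lt s z : 0 < s -> z <= s * a + b -> layer z < s.
Proof. by move=> s_gt0 zs; rewrite /layer ltn_divLR //; lia. Qed.

Lemma pi_ab_residue z : b < z -> pi_ab a b z = residue z.
Proof.
move=> bz; have w_gt : b < residue z by rewrite ltnNge leq_residue -ltnNge.
have w_le := residue_le z.
rewrite -{1}(residue_layerE z) /pi_ab (addnC (residue z)) modnMDl.
case: (ltnP (residue z) a) => wa.
  by rewrite modn_small // (_ : residue z <= b = false) ?muln0 ?addn0 //; lia.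
have -> : residue z %% a = residue z - a.
  by rewrite -{1}(subnK wa) modnDr modn_small; lia.
by rewrite (_ : residue z - a <= b = true); lia.
Qed.

Lemma pi_ab_addMn z q : pi_ab a b (z + q * a) = pi_ab a b z.
Proof. by rewrite /pi_ab (addnC z) modnMDl. Qed.

Section ResidueOfSum.

Variables x y : nat.
Let S := residue x + residue y.
Let q := layer x + layer y.

Let sumE : x + y = S + q * a.
Proof. by rewrite mulnDl -{1}(residue_layerE x) -{1}(residue_layerE y); lia. Qed.

Lemma residue_add_low : S <= a + b ->
  residue (x + y) = S /\ layer (x + y) = q.
Proof.
move=> Sab; rewrite sumE; apply: residue_layer_unique => //.
case: (leqP S b) => [Sb | bS]; [right | by left].
have xb : x <= b by rewrite -leq_residue; lia.
have yb : y <= b by rewrite -leq_residue; lia.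
by rewrite /q !layer_small.
Qed.

Lemma residue_add_mid : a + b < S -> S <= 2 * a + b ->
  residue (x + y) = S - a /\ layer (x + y) = q.+1.
Proof.
move=> hS1 hS2; rewrite sumE (_ : S + q * a = (S - a) + q.+1 * a); last by lia.
by apply: residue_layer_unique; lia.
Qed.

Lemma residue_add_high : 2 * a + b < S -> residue (x + y) = S - 2 * a.
Proof.
have := residue_le x; have := residue_le y; rewrite -/S => hx hy hS.
rewrite sumE (_ : S + q * a = (S - 2 * a) + q.+2 * a); last by lia.
by case: (@residue_layer_unique (S - 2 * a) q.+2); lia.
Qed.

Lemma residue_add_pi : a + b < S -> residue (x + y) = pi_ab a b S.
Proof.
move=> hS; rewrite -pi_ab_residue; last by rewrite sumE; lia.
by rewrite sumE pi_ab_addMn.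
Qed.

End ResidueOfSum.

End Residues.

Section Blowup.

Variables n k s a b : nat.
Variables c d : nat -> nat.
Hypothesis lt_ba : b < a.
Hypothesis s_gt0 : 0 < s.
Hypothesis c_col : colouring c (a + b) n.+1.
Hypothesis c_wsf : forall i x y, x <> y -> inA c (a + b) i x ->
  inA c (a + b) i y -> ~ inA c (a + b) i (x + y).
Hypothesis c_sf_high : forall i x y, b < x -> b < y -> inA c (a + b) i x ->
  inA c (a + b) i y -> ~ (b < x + y /\ inA c (a + b) i (x + y)).
Hypothesis c_last : forall x y, inA c (a + b) n x -> inA c (a + b) n y ->
  b + 2 * a < x + y -> ~ inA c (a + b) n (x + y - 2 * a).
Hypothesis c_pi : forall i x y, i < n -> inA c (a + b) i x ->
  inA c (a + b) i y -> a + b < x + y -> ~ inA c (a + b) i (pi_ab a b (x + y)).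
Hypothesis d_col : colouring d s k.
Hypothesis d_sf : forall i x y, inA d s i x -> inA d s i y -> ~ inA d s i (x + y).

Let N := s * a + b.

Definition blowup z :=
  let w := residue a b z in if c w < n then c w else n + d (layer a b z).+1.

Let residue_inA z : 0 < z -> 1 <= residue a b z <= a + b.
Proof. by move=> z_gt0; rewrite residue_gt0 ?residue_le. Qed.

Let layer_inA z : z <= N -> 1 <= (layer a b z).+1 <= s.
Proof. by move=> zN; rewrite ltn0Sn (layer_lt lt_ba s_gt0 zN). Qed.

Lemma blowup_template_colour z : 0 < z -> c (residue a b z) = minn (blowup z) n.
Proof.
move=> z_gt0; have := c_col (residue_inA z_gt0).
by rewrite /blowup; case: ifP => cw; lia.
Qed.

Lemma blowup_layer_colour z i : n <= i -> blowup z = i -> d (layer a b z).+1 = i - n.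
Proof. by rewrite /blowup; case: ifP => cw; lia. Qed.

Lemma blowup_colouring : colouring blowup N (n + k).
Proof.
move=> z /andP[_ /layer_inA zN]; have := d_col zN.
by rewrite /blowup; case: ifP => cw; lia.
Qed.

Lemma template_sum_free i X Y : X <> Y \/ b < X /\ b < Y ->
  inA c (a + b) i X -> inA c (a + b) i Y -> ~ inA c (a + b) i (X + Y).
Proof.
case=> [XY | [bX bY]] cX cY cXY; first exact: c_wsf XY cX cY cXY.
exact: c_sf_high bX bY cX cY (conj (ltn_addr _ bX) cXY).
Qed.

Lemma residue_neq_or_gt x y : x <> y ->
  residue a b x <> residue a b y \/ b < residue a b x /\ b < residue a b y.
Proof.
move=> xy; case: (eqVneq (residue a b x) (residue a b y)) => [eXY | /eqP]; last by left.
right; rewrite -eXY; suff bX : b < residue a b x by [].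
rewrite ltnNge leq_residue //; apply/negP => xb.
have yb : y <= b by rewrite -(leq_residue lt_ba) -eXY leq_residue.
by apply: xy; rewrite -(residue_small a xb) -(residue_small a yb).
Qed.

Lemma blowup_weakly_sum_free i x y : x <> y ->
  inA blowup N i x -> inA blowup N i y -> ~ inA blowup N i (x + y).
Proof.
move=> xy [/andP[x_gt0 xN] ex] [/andP[y_gt0 yN] ey] [/andP[xy_gt0 xyN] exy].
have inR z : 0 < z -> blowup z = i -> inA c (a + b) (minn i n) (residue a b z).
  by move=> z_gt0 <-; split; [exact: residue_inA | exact: blowup_template_colour].
have cX := inR x x_gt0 ex; have cY := inR y y_gt0 ey.
have cZ := inR _ xy_gt0 exy.
case: (leqP (residue a b x + residue a b y) (a + b)) => [low | high].
  have [ZE _] := residue_add_low lt_ba low; rewrite ZE in cZ.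
  exact: template_sum_free (residue_neq_or_gt xy) cX cY cZ.
case: (ltnP i n) => [lt_in | le_ni].
  rewrite (minn_idPl (ltnW lt_in)) in cX cY cZ.
  apply: (c_pi lt_in cX cY high).
  by rewrite -(residue_add_pi lt_ba high).
rewrite (minn_idPr le_ni) in cX cY cZ.
have dX := blowup_layer_colour le_ni ex; have dY := blowup_layer_colour le_ni ey.
have dZ := blowup_layer_colour le_ni exy.
case: (leqP (residue a b x + residue a b y) (2 * a + b)) => mid.
  have [_ layerE] := residue_add_mid lt_ba high mid.
  have sumE : (layer a b x).+1 + (layer a b y).+1 = (layer a b (x + y)).+1.
    by rewrite layerE addSn addnS.
  apply: (d_sf (conj (layer_inA xN) dX) (conj (layer_inA yN) dY)).
  by rewrite sumE; split; [exact: layer_inA | exact: dZ].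
apply: (c_last cX cY); first lia.
by rewrite -(residue_add_high lt_ba mid).
Qed.

End Blowup.

Lemma WS_template_blowup n k s a b : 0 < s ->
  WS_template b a n.+1 -> SF_partitionable k s ->
  WSF_partitionable (n + k) (s * a + b).
Proof.
move=> s_gt0 [_ [lt_ba [_ [c [c_col [c_wsf [c_sf [c_last c_pi]]]]]]]] [d [d_col d_sf]].
exists (blowup n a b c d); split.
  exact: blowup_colouring.
exact: blowup_weakly_sum_free c_col c_wsf c_sf c_last c_pi d_sf.
Qed.

Lemma SF_partitionable_1 k : 0 < k -> SF_partitionable k 1.
Proof.
move=> k_gt0; exists (fun=> 0); split => // i x y [hx _] [hy _] [hxy _]; lia.
Qed.

(* If WS^+_bmax(m) = W were attained by no template, then W = 0, and
   WS^+_(bmax+1)(m) <= W would also be 0, contradicting the maximality of bmax. *)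
Lemma largest_WSplus_b_template m W bmax : IsWSplus m W ->
  IsLargest (fun b => 0 < b /\ IsWSplus_b b m W) bmax -> WS_template bmax W m.
Proof.
move=> [hW _] [[_ [_ [// | [W0 _]]]] bmax_max].
have [w [hw w_le]] := hW bmax.+1 (ltn0Sn _).
have w0 : w = W by lia.
by rewrite w0 in hw; have := bmax_max bmax.+1 (conj (ltn0Sn _) hw); rewrite ltnn.
Qed.

Theorem corollary3p18 (n k : nat) (hn : 0 < n) (hk : 0 < k)
  (s W bmax : nat)
  (hS : IsLargest (SF_partitionable k) s)
  (hW : IsWSplus (n + 1) W)
  (hb : IsLargest (fun b => 0 < b /\ IsWSplus_b b (n + 1) W) bmax) :
  exists p, s * W + bmax <= p /\ WSF_partitionable (n + k) p.
Proof.
have template := largest_WSplus_b_template hW hb; rewrite addn1 in template.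
have [sfk s_max] := hS.
have s_gt0 : 0 < s := s_max 1 (SF_partitionable_1 hk).
exists (s * W + bmax); split => //.
exact: WS_template_blowup s_gt0 template sfk.
Qed.
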